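(* Let $(M,g,J_{TM})$ be a para-Hermitian manifold and let $(E,J)$ be an exact para-Hermitian algebroid over $M$ with anchor $\rho$ and eigenbundles $E_\pm$. If $E$ admits a para-complex connection $A:TM\to E$, then $$E_+=a_-^*(T^{(0,1)}M)\oplus A_+(T^+M),\qquad E_-=a_+^*(T^{(1,0)}M)\oplus A_-(T^-M).$$
   Context: A Courant algebroid $(E,\rho,\langle\cdot,\cdot\rangle,[\cdot,\cdot])$ over $M$ is a vector bundle with a non-degenerate symmetric pairing, a skew-symmetric bracket and an anchor $\rho:E\to TM$ satisfying the usual axioms; $\rho^*:T^*M\to E$ is given by $\langle\rho^*\xi,e\rangle=\xi(\rho e)$, and $E$ is exact if $0\to T^*M\xrightarrow{\rho^*}E\xrightarrow{\rho}TM\to0$ is exact. A para-Hermitian algebroid is a Courant algebroid with $J\in\Gamma(\mathrm{End}E)$, $J^2=\mathrm{Id}$, equal-rank eigenbundles $E_\pm$ (for $\pm1$), $\langle J\cdot,J\cdot\rangle=-\langle\cdot,\cdot\rangle$, and $\Gamma(E_\pm)$ both closed under the bracket. A para-Hermitian manifold $(M,g,J_{TM})$ has split-signature $g$, $J_{TM}^2=\mathrm{Id}$ with equal-rank integrable eigenbundles $T^\pm M$, and $g(J_{TM}\cdot,J_{TM}\cdot)=-g$. $T^{(1,0)}M\subset T^*M$ is the annihilator of $T^-M$ and $T^{(0,1)}M$ the annihilator of $T^+M$. Let $\pi_{E_\pm}$ be the projections for $E=E_+\oplus E_-$, $a_\pm=\rho|_{E_\pm}:E_\pm\to TM$, and $a_\pm^*:T^*M\to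 E$ be defined by $\langle a_\pm^*\xi,e\rangle=\xi(\rho(\pi_{E_\pm}e))$ for all $e\in E$ (so $a_\pm^*$ takes values in $E_\mp$). A connection is a bundle map $A:TM\to E$ with $\rho\circ A=\mathrm{Id}$ and isotropic image; it is para-complex if $J\circ A=A\circ J_{TM}$; $A_\pm$ denotes the restriction of $A$ to $T^\pm M$. *)

(* Fiberwise (pointwise) linear-algebra model of the
   para-Hermitian data.  Row-vector convention: a vector is a
   row 'rV_n, a linear map V -> W is a matrix 'M_(dim V, dim W) acting by
   v |-> v *m f.  Tangent fiber T_xM = 'rV_m, cotangent fiber = 'rV_m with
   duality xi(v) = xi *m v^T, fiber E_x = 'rV_k. *)
From HB Require Import structures.
From mathcomp Require Import all_boot all_order all_algebra.
Set Implicit Arguments. Unset Strict Implicit. Unset Printing Implicit Defensive.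
Import Order.TTheory GRing.Theory Num.Theory.
Local Open Scope ring_scope.

Section ParaHermitianFiber.
Variable R : realFieldType.

(* pairing <e,f> = e *m G *m f^T ; metric g(v,w) = v *m g *m w^T *)

Definition para_hermitian_fiber m (g JT : 'M[R]_m) : Prop :=
  [/\ g^T = g, g \in unitmx, JT *m JT = 1%:M,
      \rank (eigenspace JT 1) = \rank (eigenspace JT (-1)) &
      JT *m g *m JT^T = - g].

(* rho^* : T^*M -> E,  <rho^* xi, e> = xi (rho e) *)
Definition rho_star m k (G : 'M[R]_k) (rho : 'M[R]_(k, m)) : 'M[R]_(m, k) :=
  rho^T *m invmx G.

(* Courant-algebroid fiber data: symmetric nondegenerate pairing, anchor,
   exactness 0 -> T^* -> E -> T -> 0 *)
Definition exact_pairing_anchor m k (G : 'M[R]_k) (rho : 'M[R]_(k, m)) : Prop :=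
  [/\ G^T = G, G \in unitmx,
      row_full rho,
      row_free (rho_star G rho) &
      (rho_star G rho == kermx rho)%MS].

Definition para_hermitian_J k (G J : 'M[R]_k) : Prop :=
  [/\ J *m J = 1%:M,
      \rank (eigenspace J 1) = \rank (eigenspace J (-1)) &
      J *m G *m J^T = - G].

Definition Eplus k (J : 'M[R]_k) := eigenspace J 1.
Definition Eminus k (J : 'M[R]_k) := eigenspace J (-1).
Definition pi_Eplus k (J : 'M[R]_k) := proj_mx (Eplus J) (Eminus J).
Definition pi_Eminus k (J : 'M[R]_k) := proj_mx (Eminus J) (Eplus J).

(* a_+-^* : T^*M -> E, <a_+-^* xi, e> = xi (rho (pi_{E+-} e)) *)
Definition a_plus_star m k (G J : 'M[R]_k) (rho : 'M[R]_(k, m)) : 'M[R]_(m, k) :=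
  (pi_Eplus J *m rho)^T *m invmx G.
Definition a_minus_star m k (G J : 'M[R]_k) (rho : 'M[R]_(k, m)) : 'M[R]_(m, k) :=
  (pi_Eminus J *m rho)^T *m invmx G.

(* T^+M, T^-M and the annihilators T^(1,0) = ann T^-, T^(0,1) = ann T^+ *)
Definition Tplus m (JT : 'M[R]_m) := eigenspace JT 1.
Definition Tminus m (JT : 'M[R]_m) := eigenspace JT (-1).
Definition T10 m (JT : 'M[R]_m) : 'M[R]_m := kermx (Tminus JT)^T.
Definition T01 m (JT : 'M[R]_m) : 'M[R]_m := kermx (Tplus JT)^T.

Definition connection m k (G : 'M[R]_k) (rho : 'M[R]_(k, m)) (A : 'M[R]_(m, k)) : Prop :=
  A *m rho = 1%:M /\ A *m G *m A^T = 0.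

Definition para_complex m k (J : 'M[R]_k) (JT : 'M[R]_m) (A : 'M[R]_(m, k)) : Prop :=
  JT *m A = A *m J.

End ParaHermitianFiber.

From HB Require Import structures.
From mathcomp Require Import all_boot all_order all_algebra.
From mathcomp Require Import zify.
Set Implicit Arguments. Unset Strict Implicit. Unset Printing Implicit Defensive.
Import Order.TTheory GRing.Theory Num.Theory.
Local Open Scope ring_scope.

(* Fix s = +-1 and write P_t = (1 + t J)/2, the projection of E onto E_t along
   E_-t.  The dual map a^* = a_(-s)^* = G^-1 (P_-s rho)^T lands in E_s because J
   is anti-orthogonal for the pairing, and A maps T^s into E_s because it is
   para-complex.  Pairing against A(T^-s) separates the two summands: for v in
   T^-s, <a^* xi, A v> = xi(rho P_-s A v) = xi(v) since A P_-s = P_-s A and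
   rho A = 1, whereas <A w, A v> = 0 by isotropy.  Hence a^* is injective on
   ann(T^s) and its image meets A(T^s) trivially, so the sum is direct of
   dimension (m - dim T^s) + dim T^s = m; exactness gives rank E = 2m, so
   dim E_s = m and the inclusion is an equality. *)

Lemma capmx_eigenspace (F : fieldType) n (M : 'M[F]_n) (a b : F) :
  a != b -> (eigenspace M a :&: eigenspace M b = 0)%MS.
Proof.
move=> neq_ab; apply/eqP; rewrite -submx0; set X := (_ :&: _)%MS.
have /andP[/eigenspaceP XMa /eigenspaceP XMb] :
    (X <= eigenspace M a)%MS && (X <= eigenspace M b)%MS by rewrite -sub_capmx.
have : (a - b) *: X = 0 by rewrite scalerBl -XMa -XMb subrr.
by move/eqP; rewrite scalemx_eq0 subr_eq0 (negbTE neq_ab) => /eqP->.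
Qed.

Lemma proj_mx_unique (F : fieldType) n (U V P Q : 'M[F]_n) :
  (U :&: V = 0)%MS -> (P <= U)%MS -> (Q <= V)%MS -> P + Q = 1%:M ->
  proj_mx U V = P.
Proof.
move=> UV0 sPU sQV PQ1.
by rewrite -[proj_mx U V]mul1mx -PQ1 mulmxDl proj_mx_id // proj_mx_0 // addr0.
Qed.

Definition eigproj (F : fieldType) n (s : F) (M : 'M[F]_n) : 'M[F]_n :=
  2^-1 *: (1%:M + s *: M).

Section Involution.
Variables (F : numFieldType) (n : nat) (M : 'M[F]_n).
Hypothesis M2 : M *m M = 1%:M.

Lemma eigprojD (s : F) : eigproj s M + eigproj (-s) M = 1%:M.
Proof.
rewrite /eigproj -scalerDr scaleNr addrACA subrr addr0.
by rewrite -mulr2n -scaler_nat scalerA mulVf ?pnatr_eq0 ?scale1r.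
Qed.

Lemma mul_eigproj (s : F) : s ^+ 2 = 1 -> M *m eigproj s M = s *: eigproj s M.
Proof.
move=> s2; rewrite /eigproj -scalemxAr mulmxDr mulmx1 -scalemxAr M2.
rewrite [RHS]scalerA mulrC -scalerA; congr (_ *: _).
by rewrite scalerDr scalerA -expr2 s2 scale1r addrC.
Qed.

Lemma eigproj_mul (s : F) : s ^+ 2 = 1 -> eigproj s M *m M = s *: eigproj s M.
Proof.
move=> s2; rewrite /eigproj -scalemxAl mulmxDl mul1mx -scalemxAl M2.
rewrite [RHS]scalerA mulrC -scalerA; congr (_ *: _).
by rewrite scalerDr scalerA -expr2 s2 scale1r addrC.
Qed.

Lemma eigproj_sub (s : F) : s ^+ 2 = 1 -> (eigproj s M <= eigenspace M s)%MS.
Proof. by move=> s2; apply/eigenspaceP/eigproj_mul. Qed.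

Lemma eigproj_idem (s : F) : s ^+ 2 = 1 -> eigproj s M *m eigproj s M = eigproj s M.
Proof.
move=> s2; rewrite {1}/eigproj -scalemxAl mulmxDl mul1mx -scalemxAl mul_eigproj //.
rewrite scalerA -expr2 s2 scale1r -mulr2n -scaler_nat scalerA.
by rewrite mulVf ?pnatr_eq0 ?scale1r.
Qed.

Lemma sqr_eq1_neq_opp (s : F) : s ^+ 2 = 1 -> s != - s.
Proof. by move=> s2; rewrite eq_sym eqNr -sqrf_eq0 s2 oner_eq0. Qed.

Lemma proj_mx_eigenspace (s : F) : s ^+ 2 = 1 ->
  proj_mx (eigenspace M (-s)) (eigenspace M s) = eigproj (-s) M.
Proof.
move=> s2; apply: (proj_mx_unique (Q := eigproj s M)).
- by rewrite capmx_eigenspace // eq_sym sqr_eq1_neq_opp.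
- by rewrite eigproj_sub ?sqrrN.
- by rewrite eigproj_sub.
- by rewrite addrC eigprojD.
Qed.

Lemma mxrank_eigenspaceD (s : F) : s ^+ 2 = 1 ->
  (\rank (eigenspace M s) + \rank (eigenspace M (-s)))%N = n.
Proof.
move=> s2; rewrite -mxrank_disjoint_sum ?capmx_eigenspace ?sqr_eq1_neq_opp //.
apply/eqP; rewrite eqn_leq rank_leq_col -{1}(mxrank1 F n) mxrankS //.
by rewrite -(eigprojD s) addmx_sub_adds ?eigproj_sub ?sqrrN.
Qed.

End Involution.

Section ConnectionSplitting.
Variables (F : numFieldType) (m k : nat) (JT : 'M[F]_m) (G J : 'M[F]_k).
Variables (rho : 'M[F]_(k, m)) (A : 'M[F]_(m, k)) (s : F).
Hypotheses (s2 : s ^+ 2 = 1) (JT2 : JT *m JT = 1%:M) (J2 : J *m J = 1%:M).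
Hypotheses (G_unit : G \in unitmx) (JGJ : J *m G *m J^T = - G).
Hypotheses (A_rho : A *m rho = 1%:M) (A_iso : A *m G *m A^T = 0).
Hypothesis (A_para : JT *m A = A *m J).

Local Notation a_star := ((eigproj (-s) J *m rho)^T *m invmx G).
Local Notation ann := (kermx (eigenspace JT s)^T).
Local Notation PT := (eigproj (-s) JT).
Local Notation a_proj :=
  ((proj_mx (eigenspace J (-s)) (eigenspace J s) *m rho)^T *m invmx G).
(* [e *m pairing] lists the pairings [<e, A (PT v)>]: it tests [e] against [A(T^-s)]. *)
Local Notation pairing := (G *m (PT *m A)^T).

Lemma invmxJ_anti : invmx G *m J = - (J^T *m invmx G).
Proof.
have GJ : G *m J^T = - (J *m G).
  by have := congr1 (mulmx J) JGJ; rewrite mulmxN !mulmxA J2 mul1mx.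
have JG : J *m G = - (G *m J^T) by rewrite GJ opprK.
rewrite -[X in _ *m X](mulmxK G_unit J) JG mulNmx mulmxN !mulmxA mulVmx //.
by rewrite mul1mx.
Qed.

Lemma a_star_sub_eigenspace : (a_star <= eigenspace J s)%MS.
Proof.
apply/eigenspaceP; rewrite -mulmxA invmxJ_anti mulmxN mulmxA -trmx_mul mulmxA.
by rewrite mul_eigproj ?sqrrN // -scalemxAl linearZ /= -scalemxAl scaleNr opprK.
Qed.

Lemma A_eigenspace_sub : (eigenspace JT s *m A <= eigenspace J s)%MS.
Proof.
apply/eigenspaceP; rewrite -mulmxA -A_para mulmxA.
by have /eigenspaceP -> := submx_refl (eigenspace JT s); rewrite -scalemxAl.
Qed.

Lemma A_eigproj (t : F) : A *m eigproj t J = eigproj t JT *m A.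
Proof.
rewrite /eigproj -scalemxAr -scalemxAl mulmxDr mulmxDl mulmx1 mul1mx.
by rewrite -!scalemxAr -scalemxAl A_para.
Qed.

Lemma a_star_pairing : a_star *m pairing = PT^T.
Proof.
rewrite -mulmxA mulKmx // -trmx_mul -mulmxA (mulmxA A) A_eigproj.
by rewrite !mulmxA eigproj_idem ?sqrrN // -mulmxA A_rho mulmx1.
Qed.

Lemma A_pairing : A *m pairing = 0.
Proof. by rewrite trmx_mul (mulmxA G) (mulmxA A) (mulmxA A G) A_iso mul0mx. Qed.

Lemma ann_eigproj : ann *m PT^T = ann.
Proof.
have ann_compl : ann *m (eigproj s JT)^T = 0.
  have /submxP[D ->] := eigproj_sub JT2 s2.
  by rewrite (trmx_mul D) mulmxA mulmx_ker mul0mx.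
by rewrite -[RHS]mulmx1 -trmx1 -(eigprojD JT s) linearD /= mulmxDr ann_compl add0r.
Qed.

Lemma mxrank_ann_a_star : \rank (ann *m a_star) = \rank ann.
Proof.
apply/eqP; rewrite eqn_leq mxrankM_maxl /=.
by rewrite -{1}ann_eigproj -a_star_pairing mulmxA mxrankM_maxl.
Qed.

Lemma capmx_ann_a_star_A : (ann *m a_star :&: eigenspace JT s *m A = 0)%MS.
Proof.
apply/eqP; rewrite -submx0; set X := (_ :&: _)%MS.
have /andP[/submxP[D1 XD1] /submxP[D2 XD2]] :
    (X <= ann *m a_star)%MS && (X <= eigenspace JT s *m A)%MS by rewrite -sub_capmx.
have D1ann : D1 *m ann = 0.
  have <- : X *m pairing = D1 *m ann.
    by rewrite XD1 -(mulmxA D1) -(mulmxA ann) a_star_pairing ann_eigproj.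
  by rewrite XD2 -(mulmxA D2) -(mulmxA (eigenspace JT s)) A_pairing !mulmx0.
by rewrite XD1 mulmxA D1ann mul0mx.
Qed.

Lemma mxrank_ann_a_star_addsA : \rank (ann *m a_star + eigenspace JT s *m A)%MS = m.
Proof.
have A_free : row_free A by apply/row_freeP; exists rho.
rewrite mxrank_disjoint_sum ?capmx_ann_a_star_A // mxrank_ann_a_star mxrankMfree //.
by rewrite mxrank_ker mxrank_tr subnK ?rank_leq_row.
Qed.

Lemma eigenspace_decomposition : \rank (eigenspace J s) = m ->
  (eigenspace J s == ann *m a_proj + eigenspace JT s *m A)%MS &&
  mxdirect (ann *m a_proj + eigenspace JT s *m A).
Proof.
move=> rank_Es; rewrite proj_mx_eigenspace //.
have sub_Es : (ann *m a_star + eigenspace JT s *m A <= eigenspace J s)%MS.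
  rewrite addsmx_sub A_eigenspace_sub andbT.
  exact: submx_trans (submxMl _ _) a_star_sub_eigenspace.
have /andP[_ ->] : (ann *m a_star + eigenspace JT s *m A == eigenspace J s)%MS.
  by rewrite -(mxrank_leqif_eq sub_Es).2 mxrank_ann_a_star_addsA rank_Es.
by rewrite sub_Es; apply/mxdirect_addsP/capmx_ann_a_star_A.
Qed.

End ConnectionSplitting.

Lemma exact_pairing_anchor_dim (R : realFieldType) m k
    (G : 'M[R]_k) (rho : 'M[R]_(k, m)) :
  exact_pairing_anchor G rho -> k = (m + m)%N.
Proof.
case=> _ _ rho_full rho_star_free /eqmx_rank.
rewrite (eqP rho_star_free) mxrank_ker (eqP rho_full).
by have := rank_leq_row rho; rewrite (eqP rho_full); lia.
Qed.

Theorem mainTheorem4 (R : realFieldType) (m k : nat)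
    (g JT : 'M[R]_m) (G J : 'M[R]_k) (rho : 'M[R]_(k, m)) (A : 'M[R]_(m, k)) :
  para_hermitian_fiber g JT ->
  exact_pairing_anchor G rho ->
  para_hermitian_J G J ->
  connection G rho A ->
  para_complex J JT A ->
  [/\ (Eplus J == T01 JT *m a_minus_star G J rho + Tplus JT *m A)%MS,
      mxdirect (T01 JT *m a_minus_star G J rho + Tplus JT *m A),
      (Eminus J == T10 JT *m a_plus_star G J rho + Tminus JT *m A)%MS &
      mxdirect (T10 JT *m a_plus_star G J rho + Tminus JT *m A)].
Proof.
move=> [_ _ JT2 _ _] exact [J2 rank_eq JGJ] [A_rho A_iso] A_para.
have G_unit : G \in unitmx by case: exact.
have rank_sum : (\rank (eigenspace J 1) + \rank (eigenspace J (-1)))%N = k :=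
  mxrank_eigenspaceD J2 (expr1n R 2).
have rank_Ep : \rank (eigenspace J 1) = m.
  by have := exact_pairing_anchor_dim exact; lia.
have rank_Em : \rank (eigenspace J (-1)) = m by rewrite -rank_eq.
have /andP[Ep Ep_direct] := eigenspace_decomposition (expr1n R 2)
  JT2 J2 G_unit JGJ A_rho A_iso A_para rank_Ep.
have sqr_m1 : (-1 : R) ^+ 2 = 1 by rewrite sqrrN expr1n.
have := eigenspace_decomposition sqr_m1 JT2 J2 G_unit JGJ A_rho A_iso A_para rank_Em.
rewrite opprK => /andP[Em Em_direct].
by rewrite /Eplus /Eminus /T01 /T10 /Tplus /Tminus /a_minus_star /a_plus_star
  /pi_Eminus /pi_Eplus.
Qed.
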